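(* Let $K\ge 1$, let $V=V_1\sqcup\cdots\sqcup V_K$ be a finite vertex set with $|V_i|=n_i$, let $b:V\to\{1,\dots,K\}$ be the block membership function ($b(v)=i$ iff $v\in V_i$), and let $\Lambda\in(0,1)^{K\times K}$ be a symmetric matrix. Let $V=S\sqcup A$ (seeds $S$, ambiguous vertices $A$), with $m_i=|S\cap V_i|$, $m=\sum_i m_i$, $n=\sum_i n_i$, and assume $n_1-m_1\ge 1$. Then for every vertex nomination scheme $\mathcal{L}$ (in the sense defined in the context), the canonical vertex nomination scheme $\mathcal{L}^C$ satisfies $$MAP(\mathcal{L}^C)\ \ge\ MAP(\mathcal{L}),$$ where both mean average precisions are computed with respect to $\mathbf{G}\sim \mathrm{SBM}(K,\vec n,b,\Lambda)$.
   Context: SBM: A random graph $\mathbf{G}$ on $V$ is $\mathrm{SBM}(K,\vec n,b,\Lambda)$ if, for each unordered pair $\{u,v\}$ of distinct vertices, the edge $u\sim v$ is present independently with probability $\Lambda_{b(u),b(v)}$. Vertex nomination scheme: Let $\mathcal{G}$ be the set of all (simple, undirected) graphs on vertex set $V=S\sqcup A$, and suppose $S$, $A$ and the restriction $b|_S$ are given. A vertex nomination scheme is a function $\mathcal{L}$ assigning to each $G\in\mathcal{G}$ an ordering $(\mathcal{L}_{G,1},\dots,\mathcal{L}_{G,n-m})$ of $A$ (the nomination list), subject to: (i) every graph with a nontrivial automorphism is assigned the empty nomination list; (ii) for any asymmetric $G,H\in\mathcal{G}$ and any isomorphism $\gamma:G\to H$ that is the identity on $S$, $\gamma(\mathcal{L}_{G,i})=\mathcal{L}_{H,i}$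 for all $i$. Mean average precision: $MAP(\mathcal{L})=\mathbb{E}\Big(\frac{1}{n_1-m_1}\sum_{j=1}^{n_1-m_1}\frac{|\{i:1\le i\le j,\ b(\mathcal{L}_{\mathbf{G},i})=1\}|}{j}\Big)$, the expectation over $\mathbf{G}\sim\mathrm{SBM}(K,\vec n,b,\Lambda)$ (positions absent from an empty list contribute nothing). Canonical scheme: Let $\Phi$ be the set of functions $\varphi:V\to\{1,\dots,K\}$ with $\varphi(v)=b(v)$ for all $v\in S$ and $|\{v:\varphi(v)=i\}|=n_i$ for all $i$. For $G\in\mathcal{G}$ and $\varphi\in\Phi$, let $e^{G,\varphi}_{i,j}$ be the number of edges of $G$ with one endpoint mapped by $\varphi$ to $i$ and the other to $j$, and $c^{G,\varphi}_{i,j}=n_in_j-e^{G,\varphi}_{i,j}$ for $i\ne j$, $c^{G,\varphi}_{i,i}=\binom{n_i}{2}-e^{G,\varphi}_{i,i}$. Define for $v\in A$ $$\mathbb{Q}(\phi(v)=1\mid G)=\frac{\sum_{\varphi\in\Phi:\varphi(v)=1}\prod_{i=1}^K\prod_{j=i}^K\Lambda_{i,j}^{e^{G,\varphi}_{i,j}}(1-\Lambda_{i,j})^{c^{G,\varphi}_{i,j}}}{\sum_{\varphi\in\Phi}\prod_{i=1}^K\prod_{j=i}^K\Lambda_{i,j}^{e^{G,\varphi}_{i,j}}(1-\Lambda_{i,j})^{c^{G,\varphi}_{i,j}}},$$ i.e. the posterior probability that $v$ is in block 1 when $\varphi$ is drawn uniformly from $\Phi$ and then $G\sim\mathrm{SBM}(K,\vec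 n,\varphi,\Lambda)$. The canonical scheme $\mathcal{L}^C$ is the vertex nomination scheme which (for asymmetric $G$) lists the vertices of $A$ in nonincreasing order of $\mathbb{Q}(\phi(v)=1\mid G)$, ties broken arbitrarily. *)

From mathcomp Require Import all_boot all_order all_algebra all_fingroup.
Set Implicit Arguments. Unset Strict Implicit. Unset Printing Implicit Defensive.
Import Order.TTheory GRing.Theory Num.Theory.
Local Open Scope ring_scope.

Section SBM.
Variables (R : realFieldType) (V : finType) (K : nat).

Definition is_graph (G : {set {set V}}) : bool :=
  [forall e in G, #|e| == 2%N].

(* Probability of the graph G under SBM(K, n, phi, Lambda): independent edges
   over unordered pairs {u,v} (enumerated as enum_rank u < enum_rank v). *)
Definition sbm_prob (phi : V -> 'I_K) (Lam : 'M[R]_K) (G : {set {set V}}) : R :=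
  \prod_(u : V) \prod_(v : V | (enum_rank u < enum_rank v)%N)
     (if [set u; v] \in G then Lam (phi u) (phi v) else 1 - Lam (phi u) (phi v)).

Definition bsize (b : V -> 'I_K) (i : 'I_K) : nat := #|[set v | b v == i]|.

Definition is_iso (g : {perm V}) (G H : {set {set V}}) : bool :=
  [forall e : {set V}, (e \in G) == ((g @: e) \in H)].

Definition asymmetric (G : {set {set V}}) : bool :=
  [forall g : {perm V}, is_iso g G G ==> (g == 1%g)].

(* Vertex nomination scheme, with A = ~: S. *)
Definition is_VN_scheme (S : {set V}) (L : {set {set V}} -> seq V) : Prop :=
  (forall G, is_graph G -> ~~ asymmetric G -> L G = [::]) /\
  (forall G, is_graph G -> asymmetric G -> perm_eq (L G) (enum (~: S))) /\
  (forall G H (g : {perm V}), is_graph G -> is_graph H ->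
     asymmetric G -> asymmetric H -> is_iso g G H ->
     (forall s, s \in S -> g s = s) ->
     map g (L G) = L H).

Definition MAP (b : V -> 'I_K) (blk1 : 'I_K) (Lam : 'M[R]_K) (S : {set V})
    (L : {set {set V}} -> seq V) : R :=
  let N := (bsize b blk1 - #|S :&: [set v | b v == blk1]|)%N in
  \sum_(G : {set {set V}} | is_graph G)
     sbm_prob b Lam G *
     (N%:R^-1 * \sum_(1 <= j < N.+1)
        (count (fun v => b v == blk1) (take j (L G)))%:R / j%:R).

Definition admissible (b : V -> 'I_K) (S : {set V}) (phi : {ffun V -> 'I_K}) : bool :=
  [forall s in S, phi s == b s] && [forall i, #|[set v | phi v == i]| == bsize b i].

Definition ecount (G : {set {set V}}) (phi : {ffun V -> 'I_K}) (i j : 'I_K) : nat :=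
  #|[set e in G | [exists u, exists v,
        [&& e == [set u; v], u != v, phi u == i & phi v == j]]]|.

Definition ccount (b : V -> 'I_K) (G : {set {set V}}) (phi : {ffun V -> 'I_K})
    (i j : 'I_K) : nat :=
  if i == j then ('C(bsize b i, 2) - ecount G phi i j)%N
  else (bsize b i * bsize b j - ecount G phi i j)%N.

Definition lik (b : V -> 'I_K) (Lam : 'M[R]_K) (G : {set {set V}})
    (phi : {ffun V -> 'I_K}) : R :=
  \prod_(i < K) \prod_(j < K | (i <= j)%N)
     (Lam i j ^+ ecount G phi i j * (1 - Lam i j) ^+ ccount b G phi i j).

Definition Qpost (b : V -> 'I_K) (blk1 : 'I_K) (Lam : 'M[R]_K) (S : {set V})
    (G : {set {set V}}) (v : V) : R :=
  (\sum_(phi | admissible b S phi && (phi v == blk1)) lik b Lam G phi) /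
  (\sum_(phi | admissible b S phi) lik b Lam G phi).

Definition is_canonical_scheme (b : V -> 'I_K) (blk1 : 'I_K) (Lam : 'M[R]_K)
    (S : {set V}) (L : {set {set V}} -> seq V) : Prop :=
  is_VN_scheme S L /\
  (forall G, is_graph G -> asymmetric G ->
     sorted (fun u v => Qpost b blk1 Lam S G v <= Qpost b blk1 Lam S G u) (L G)).

End SBM.

From mathcomp Require Import all_boot all_order all_algebra all_fingroup.
Import Order.TTheory GRing.Theory Num.Theory.
Set Implicit Arguments. Unset Strict Implicit. Unset Printing Implicit Defensive.
Local Open Scope ring_scope.

(* Average over the pointwise stabiliser of the seeds.  Relabelling a graph G
   by a permutation s fixing S turns its SBM probability into (a constant times)
   the likelihood of G under the block assignment b \o s, and as s ranges over
   the stabiliser, b \o s hits every admissible assignment equally often.  So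
   the weight of the relabellings that put v into block 1 is proportional to
   Q(phi(v) = 1 | G), with a factor depending only on G.  A nomination scheme
   commutes with these relabellings, hence |Stab| * MAP(L) is a sum over graphs
   of that factor times the average precision of L(G) with Q as relevance, and
   the list sorted by Q maximises every prefix sum of Q. *)

Lemma perm_of_eq_fiber_card (V : finType) (T : eqType) (f g : V -> T) :
  (forall t, #|[set x | f x == t]| = #|[set x | g x == t]|) ->
  exists s : {perm V}, forall x, g (s x) = f x.
Proof.
move=> fg_card.
pose F x := enum [set y | f y == f x].
pose G x := enum [set y | g y == f x].
pose h x := nth x (G x) (index x (F x)).
have F_x x : x \in F x by rewrite mem_enum inE.
have index_lt x : (index x (F x) < size (G x))%N.
  by rewrite /G -cardE -fg_card cardE index_mem.
have g_h x : g (h x) = f x.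
  by have := mem_nth x (index_lt x); rewrite mem_enum inE => /eqP.
have h_inj : injective h.
  move=> x y hxy; have fxy : f x = f y by rewrite -g_h hxy g_h.
  have := index_lt x; have := index_lt y; have := F_x x; have := F_x y.
  rewrite /h /G /F fxy in hxy * => Fy Fx ltx lty.
  rewrite (set_nth_default y) // in hxy.
  move/eqP: hxy; rewrite nth_uniq ?enum_uniq // => /eqP ixy.
  by rewrite -(nth_index y Fx) ixy nth_index.
by exists (perm h_inj) => x; rewrite permE.
Qed.

Lemma sum_take_rem_le (T : eqType) (R : numDomainType) (q : T -> R) (t : seq T)
    (x : T) (k : nat) :
  x \in t -> (forall y, y \in t -> q y <= q x) ->
  \sum_(v <- take k.+1 t) q v <= q x + \sum_(v <- take k (rem x t)) q v.
Proof.
elim: t k => [|y t IHt] k //= xt max_x; rewrite big_cons.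
have [<- | yx] := eqVneq y x; first exact: lexx.
case: k => [|k]; first by rewrite take0 !big_nil !addr0 max_x ?mem_head.
rewrite /= big_cons addrCA lerD2l; apply: IHt => [|z zt].
  by move: xt; rewrite in_cons eq_sym (negbTE yx).
by rewrite max_x // mem_behead.
Qed.

Lemma sum_take_le_sorted (T : eqType) (R : numDomainType) (q : T -> R) (s t : seq T) :
  sorted (fun u v => q v <= q u) s -> perm_eq t s ->
  forall j, \sum_(v <- take j t) q v <= \sum_(v <- take j s) q v.
Proof.
elim: s t => [|x s IHs] t s_sorted ts j; first by rewrite (perm_small_eq _ ts).
case: j => [|j]; first by rewrite !take0 !big_nil.
have xt : x \in t by rewrite (perm_mem ts) mem_head.
have ge_trans : transitive (fun u v => q v <= q u).
  by move=> a c d ca dc; apply: le_trans dc ca.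
have max_x y : y \in t -> q y <= q x.
  rewrite (perm_mem ts) in_cons => /predU1P [-> // | ys].
  exact: (allP (order_path_min ge_trans s_sorted)).
apply: le_trans (sum_take_rem_le j xt max_x) _.
rewrite /= big_cons lerD2l; apply: IHs; first exact: path_sorted s_sorted.
by rewrite -(perm_cons x) (perm_trans _ ts) // perm_sym perm_to_rem.
Qed.

Lemma prod2_update (T : finType) (R : comPzRingType) (P : T -> T -> bool)
    (F1 F2 : T -> T -> R) u v c1 c2 :
  P u v -> (forall x y, P x y -> (x, y) != (u, v) -> F1 x y = F2 x y) ->
  F1 u v * c2 = F2 u v * c1 ->
  (\prod_x \prod_(y | P x y) F1 x y) * c2 = (\prod_x \prod_(y | P x y) F2 x y) * c1.
Proof.
move=> Puv F12 F12uv.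
have split_uv (F : T -> T -> R) : \prod_x \prod_(y | P x y) F x y =
    F u v * ((\prod_(y | P u y && (y != v)) F u y) *
             \prod_(x | x != u) \prod_(y | P x y) F x y).
  by rewrite (bigD1 u) //= (bigD1 v) //= mulrA.
rewrite !split_uv mulrAC F12uv mulrAC; congr (_ * (_ * _) * _).
  by apply: eq_bigr => y /andP [Puy yv]; rewrite F12 // xpair_eqE negb_and yv orbT.
by apply: eq_bigr => x xu; apply: eq_bigr => y Pxy; rewrite F12 // xpair_eqE negb_and xu.
Qed.

Section Relabel.
Variable V : finType.
Local Open Scope group_scope.
Implicit Types (s g : {perm V}) (e : {set V}) (G H : {set {set V}}).

Definition relabel s G : {set {set V}} := (('P^*)^*)%act G s.

Lemma relabelE s G : relabel s G = [set s @: e | e : {set V} in G].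
Proof. by []. Qed.

Lemma relabel_inj s : injective (relabel s).
Proof. exact: act_inj. Qed.

Lemma mem_relabel s G e : (s @: e \in relabel s G) = (e \in G).
Proof. by rewrite relabelE mem_imset //; apply: imset_inj; apply: perm_inj. Qed.

Lemma is_graph_relabel s G : is_graph (relabel s G) = is_graph G.
Proof.
have card_s e : #|s @: e| = #|e| by apply: card_imset; apply: perm_inj.
apply/forall_inP/forall_inP => HG e.
  by move=> eG; rewrite -card_s; apply: HG; rewrite mem_relabel.
by rewrite relabelE => /imsetP [e' e'G ->]; rewrite card_s HG.
Qed.

Lemma is_isoE g G H : is_iso g G H = (relabel g G == H).
Proof.
apply/forallP/eqP => [iso | <- e]; last by rewrite mem_relabel.
apply/setP => e; have -> : e = g @: (g^-1 @: e) := esym (actKV ('P^*)%act g e).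
by rewrite -(eqP (iso _)) mem_relabel.
Qed.

Lemma asymmetricE G : asymmetric G = ('C[G | ('P^*)^*] \subset [1]).
Proof.
apply/forallP/subsetP => [asym g | triv g]; last first.
  by apply/implyP; rewrite is_isoE => /eqP fixG; rewrite -in_set1 triv //; apply/astab1P.
by move/astab1P/eqP; rewrite -is_isoE => iso; rewrite inE (implyP (asym g)).
Qed.

Lemma asymmetric_relabel s G : asymmetric (relabel s G) = asymmetric G.
Proof. by rewrite !asymmetricE astab1_act !subG1 conjsg_eq1. Qed.

End Relabel.

Lemma VN_scheme_relabel (V : finType) (S : {set V}) (L : {set {set V}} -> seq V)
    (s : {perm V}) (G : {set {set V}}) :
  is_VN_scheme S L -> is_graph G -> s \in 'C(S | 'P)%g ->
  L (relabel s G) = map s (L G).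
Proof.
case=> [sym [_ iso]] HG /astabP fixS.
have HsG : is_graph (relabel s G) by rewrite is_graph_relabel.
have [asym | sym_G] := boolP (asymmetric G); last by rewrite !sym ?asymmetric_relabel.
by symmetry; apply: iso; rewrite ?asymmetric_relabel ?is_isoE.
Qed.

Section EdgeCount.
Variables (V : finType) (K : nat).
Implicit Types (G H : {set {set V}}) (phi : {ffun V -> 'I_K}) (i j : 'I_K).

Lemma ecount_relabel (s : {perm V}) G phi i j :
  ecount G [ffun x => phi (s x)] i j = ecount (relabel s G) phi i j.
Proof.
have inj_s : injective (fun e : {set V} => s @: e) := imset_inj (@perm_inj _ s).
rewrite /ecount -[RHS](card_preimset _ inj_s).
apply: eq_card => e; rewrite !inE mem_relabel; congr andb.
apply/existsP/existsP => [[x /existsP [y]] | [x /existsP [y]]].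
  rewrite !ffunE => /and4P [/eqP -> xy fx fy].
  exists (s x); apply/existsP; exists (s y).
  by rewrite imsetU1 imset_set1 (inj_eq perm_inj) xy fx fy eqxx.
case/and4P=> [/eqP E xy fx fy]; exists (s^-1%g x); apply/existsP; exists (s^-1%g y).
rewrite (inj_eq perm_inj) xy !ffunE !permKV fx fy !andbT.
by apply/eqP/inj_s; rewrite E imsetU1 imset_set1 !permKV.
Qed.

Lemma set2_eq_cases (x y u v : V) : u != v -> [set x; y] = [set u; v] ->
  (x = u /\ y = v) \/ (x = v /\ y = u).
Proof.
move=> uv E.
have /set2P [xu | xv] : x \in [set u; v] by rewrite -E set21.
  left; split=> //; have /set2P [yu | //] : y \in [set u; v] by rewrite -E set22.
  have /set2P [vx | vy] : v \in [set x; y] by rewrite E set22.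
  - by rewrite vx xu eqxx in uv.
  - by rewrite vy yu eqxx in uv.
right; split=> //; have /set2P [// | yv] : y \in [set u; v] by rewrite -E set22.
have /set2P [ux | uy] : u \in [set x; y] by rewrite E set21.
- by rewrite ux xv eqxx in uv.
- by rewrite uy yv eqxx in uv.
Qed.

Lemma ecountU1 H phi (e : {set V}) i j : e \notin H ->
  ecount (e |: H) phi i j =
  ([exists u, exists v, [&& e == [set u; v], u != v, phi u == i & phi v == j]]
   + ecount H phi i j)%N.
Proof.
move=> eH; rewrite /ecount.
have [Pe | nPe] :=
  boolP [exists u, exists v, [&& e == [set u; v], u != v, phi u == i & phi v == j]].
  rewrite (_ : [set _ in _ | _] = e |: [set e' in H | [exists u, exists v,
             [&& e' == [set u; v], u != v, phi u == i & phi v == j]]]).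
    by rewrite cardsU1 inE (negbTE eH).
  by apply/setP => e'; rewrite !inE; case: eqP => [-> | //]; rewrite Pe.
rewrite add0n; apply: eq_card => e'; rewrite !inE; case: eqP => [-> | //].
by rewrite (negbTE eH) (negbTE nPe).
Qed.

Lemma ecount_le H phi i j :
  (ecount H phi i j <= if i == j then 'C(#|[set v | phi v == i]|, 2)
                       else #|[set v | phi v == i]| * #|[set v | phi v == j]|)%N.
Proof.
rewrite /ecount; case: eqP => [<- | _].
  rewrite -cards_draws; apply/subset_leq_card/subsetP => e.
  rewrite !inE => /andP [_ /existsP [x /existsP [y /and4P [/eqP -> xy fx fy]]]].
  rewrite cards2 xy andbT; apply/subsetP => z.
  by rewrite !inE => /orP [] /eqP ->.
rewrite -cardsX; apply: leq_trans (leq_imset_card (fun p => [set p.1; p.2]) _).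
apply/subset_leq_card/subsetP => e.
rewrite inE => /andP [_ /existsP [x /existsP [y /and4P [/eqP -> xy fx fy]]]].
by apply/imsetP; exists (x, y); rewrite // inE /= !inE fx fy.
Qed.

End EdgeCount.

Section Likelihood.
Variables (R : realFieldType) (V : finType) (K : nat) (b : V -> 'I_K) (Lam : 'M[R]_K).
Hypothesis Lam_sym : forall i j, Lam i j = Lam j i.
Implicit Types (G H : {set {set V}}) (phi : {ffun V -> 'I_K}).

Lemma lik_relabel (s : {perm V}) G phi :
  lik b Lam G [ffun x => phi (s x)] = lik b Lam (relabel s G) phi.
Proof.
by apply: eq_bigr => i _; apply: eq_bigr => j _; rewrite /ccount !ecount_relabel.
Qed.

Lemma sbm_prob_addedge H u v : u != v -> [set u; v] \notin H ->
  sbm_prob b Lam ([set u; v] |: H) * (1 - Lam (b u) (b v)) =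
  sbm_prob b Lam H * Lam (b u) (b v).
Proof.
move=> uv.
wlog ruv : u v uv / (enum_rank u < enum_rank v)%N => [ordered | uvH].
  case: (ltngtP (enum_rank u) (enum_rank v)) => [||/ord_inj/enum_rank_inj eq_uv].
  - exact: ordered.
  - by rewrite setUC Lam_sym; apply: ordered; rewrite // eq_sym.
  - by rewrite eq_uv eqxx in uv.
apply: (prod2_update (u := u) (v := v)) => // [x y|]; last first.
  by rewrite setU11 (negbTE uvH) mulrC.
rewrite xpair_eqE negb_and in_setU1.
case: ([set x; y] =P [set u; v]) => [/(set2_eq_cases uv) [[-> ->] | [-> ->]] | //].
  by rewrite !eqxx.
by rewrite ltnNge ltnW.
Qed.

Lemma lik_addedge H u v : u != v -> [set u; v] \notin H ->
  lik b Lam ([set u; v] |: H) [ffun x => b x] * (1 - Lam (b u) (b v)) =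
  lik b Lam H [ffun x => b x] * Lam (b u) (b v).
Proof.
move=> uv.
wlog buv : u v uv / (b u <= b v)%N => [ordered | uvH].
  case: (leqP (b u) (b v)) => [|/ltnW]; first exact: ordered.
  by rewrite setUC Lam_sym; apply: ordered; rewrite // eq_sym.
have blocks i : [set x | [ffun x => b x] x == i] = [set x | b x == i].
  by apply/setP => x; rewrite !inE ffunE.
apply: (prod2_update (u := b u) (v := b v)) => // [i j ij ij_uv|].
  rewrite /ccount ecountU1 //; case: existsP => [[x /existsP [y]] | //].
  rewrite !ffunE => /and4P [/eqP /esym /(set2_eq_cases uv) xy_uv _ /eqP bx /eqP by_].
  move: ij ij_uv; rewrite -bx -by_.
  case: xy_uv => [[-> ->] | [-> ->] bvu]; first by rewrite !eqxx.
  have /eqP -> : b v == b u by rewrite -val_eqE eqn_leq bvu buv.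
  by rewrite !eqxx.
have ecountS : ecount ([set u; v] |: H) [ffun x => b x] (b u) (b v) =
               (ecount H [ffun x => b x] (b u) (b v)).+1.
  rewrite ecountU1 // (_ : [exists _, _] = true) //.
  by apply/existsP; exists u; apply/existsP; exists v; rewrite !ffunE uv !eqxx.
(* ecount_le rules out truncation in ccount, so the new edge moves one unit
   of exponent from 1 - Lam to Lam. *)
have := ecount_le ([set u; v] |: H) [ffun x => b x] (b u) (b v).
rewrite /ccount !blocks ecountS -!/(bsize b _).
set a := Lam (b u) (b v); set e := ecount _ _ _ _.
by case: (b u == b v) => le_e; rewrite -(subnSK le_e) !exprS;
  move: (a ^+ e) ((1 - a) ^+ _) => X Y; rewrite [RHS]mulrC mulrA [_ * Y]mulrC mulrA.
Qed.

Hypotheses (Lam_pos : forall i j, 0 < Lam i j) (Lam_lt1 : forall i j, Lam i j < 1).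

Lemma lik_gt0 G phi : 0 < lik b Lam G phi.
Proof.
apply: prodr_gt0 => i _; apply: prodr_gt0 => j _.
by rewrite mulr_gt0 ?exprn_gt0 ?subr_gt0.
Qed.

Lemma sbm_prob_ge0 G : 0 <= sbm_prob b Lam G.
Proof.
by apply: prodr_ge0 => u _; apply: prodr_ge0 => v _; case: ifP; rewrite ?subr_ge0 ltW.
Qed.

(* Adding an edge multiplies sbm_prob and lik by the same factor, so their
   ratio does not depend on the graph (they are in fact equal, but the ratio is
   all that is needed). *)
Lemma sbm_prob_lik H : is_graph H ->
  sbm_prob b Lam H * lik b Lam set0 [ffun x => b x] =
  sbm_prob b Lam set0 * lik b Lam H [ffun x => b x].
Proof.
move Hn : #|H| => n; elim: n H Hn => [|n IHn] H Hn HG.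
  by move/eqP: Hn; rewrite cards_eq0 => /eqP ->; rewrite mulrC.
have [e eH] : exists e, e \in H by apply/set0Pn; rewrite -card_gt0 Hn.
have /cards2P [u [v [uv Ee]]] := forall_inP HG e eH.
have HG' : is_graph (H :\ e).
  by apply/forall_inP => f /setD1P [_ fH]; apply: (forall_inP HG).
have Hn' : #|H :\ e| = n by have := cardsD1 e H; rewrite eH Hn => -[].
have nH' : [set u; v] \notin H :\ e by rewrite -Ee setD11.
have ne0 : 1 - Lam (b u) (b v) != 0 by rewrite subr_eq0 gt_eqF.
have -> : H = [set u; v] |: (H :\ e) by rewrite -Ee setD1K.
apply: (mulIf ne0); rewrite mulrAC sbm_prob_addedge // mulrAC IHn //.
by rewrite -mulrA -lik_addedge // mulrA.
Qed.

End Likelihood.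

Section Admissible.
Variables (V : finType) (K : nat) (b : V -> 'I_K) (S : {set V}).
Local Notation stab := ('C(S | 'P))%g.

Lemma admissible_relabel (phi : {ffun V -> 'I_K}) :
  admissible b S phi -> exists2 s, s \in stab & forall x, b (s x) = phi x.
Proof.
case/andP=> /forall_inP phiS /forallP phi_card.
pose f x : V + 'I_K := if x \in S then inl x else inr (phi x).
pose g x : V + 'I_K := if x \in S then inl x else inr (b x).
have [s gsf] : exists s : {perm V}, forall x, g (s x) = f x.
  apply: perm_of_eq_fiber_card => -[y | i].
    by apply: eq_card => x; rewrite !inE /f /g; case: ifP.
  have fiberD (h : V -> 'I_K) :
      [set x | (if x \in S then inl x else inr (h x)) == inr i] =
      [set x | h x == i] :\: S.
    by apply/setP => x; rewrite !inE; case: ifP.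
  have capS : [set x | phi x == i] :&: S = [set x | b x == i] :&: S.
    apply/setP => x; rewrite !inE.
    by case: (boolP (x \in S)) => xS; rewrite ?andbT ?andbF // (eqP (phiS x xS)).
  rewrite !fiberD; apply/eqP; rewrite -(eqn_add2l #|[set x | phi x == i] :&: S|).
  by rewrite cardsID capS cardsID; apply: phi_card.
have sS x : x \in S -> s x = x.
  by move=> xS; move: (gsf x); rewrite /f /g xS; case: ifP => // _ [].
exists s; first by apply/astabP.
move=> x; have [xS | xNS] := boolP (x \in S); first by rewrite sS // (eqP (phiS x xS)).
by move: (gsf x); rewrite /f /g (negbTE xNS); case: ifP => // _ [].
Qed.

Lemma admissible_relabel_blocks s : s \in stab -> admissible b S [ffun x => b (s x)].
Proof.
move=> /astabP sS; apply/andP; split.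
  by apply/forall_inP => x xS; rewrite ffunE [s x]sS.
apply/forallP => i; rewrite /bsize -[X in _ == X](card_preimset _ (@perm_inj _ s)).
by apply/eqP/eq_card => x; rewrite !inE ffunE.
Qed.

Lemma admissible_blocks : admissible b S [ffun x => b x].
Proof.
apply/andP; split; first by apply/forall_inP => x _; rewrite ffunE.
by apply/forallP => i; apply/eqP/eq_card => x; rewrite !inE ffunE.
Qed.

Lemma sum_stab_admissible (M : nmodType) (h : {ffun V -> 'I_K} -> M) :
  \sum_(s in stab) h [ffun x => b (s x)] =
  (\sum_(phi | admissible b S phi) h phi) *+
    #|[set s in stab | [ffun x => b (s x)] == [ffun x => b x]]|.
Proof.
rewrite (partition_big (fun s : {perm V} => [ffun x => b (s x)]) (admissible b S)) /=;
  last exact: admissible_relabel_blocks.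
rewrite -sumrMnl; apply: eq_bigr => phi /admissible_relabel [s0 s0S b_s0].
rewrite (eq_bigr (fun=> h phi)) => [|s /andP [_ /eqP <-] //].
rewrite (reindex_inj (mulgI s0)) /= -sumr_const; apply: eq_bigl => t.
rewrite inE groupMl //; congr andb; apply/eqP/eqP => /ffunP E; apply/ffunP => x.
  by move: (E (s0^-1 x)%g); rewrite !ffunE permM permKV -b_s0 permKV.
by rewrite !ffunE permM -b_s0; move: (E (s0 x)); rewrite !ffunE.
Qed.

End Admissible.

Section AveragePrecision.
Variable R : numFieldType.

Definition avg_precision (T : Type) (N : nat) (q : T -> R) (l : seq T) : R :=
  N%:R^-1 * \sum_(1 <= j < N.+1) (\sum_(v <- take j l) q v) / j%:R.

Lemma eq_avg_precision (T : Type) N (q1 q2 : T -> R) (l : seq T) :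
  q1 =1 q2 -> avg_precision N q1 l = avg_precision N q2 l.
Proof.
by move=> q12; congr (_ * _); apply: eq_bigr => j _; under eq_bigr do rewrite q12.
Qed.

Lemma avg_precision_map (T U : Type) (f : U -> T) N (q : T -> R) (l : seq U) :
  avg_precision N q (map f l) = avg_precision N (q \o f) l.
Proof.
by congr (_ * _); apply: eq_bigr => j _; rewrite -map_take big_map.
Qed.

Lemma avg_precision_scale (T : Type) N c (q : T -> R) (l : seq T) :
  avg_precision N (fun v => c * q v) l = c * avg_precision N q l.
Proof.
rewrite /avg_precision [RHS]mulrCA; congr (_ * _).
rewrite mulr_sumr; apply: eq_bigr => j _.
by rewrite -mulr_sumr mulrA.
Qed.

Lemma avg_precision_sum (T : Type) (I : finType) (A : {pred I}) (w : I -> R)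
    (q : I -> T -> R) N (l : seq T) :
  \sum_(i in A) w i * avg_precision N (q i) l =
  avg_precision N (fun v => \sum_(i in A) w i * q i v) l.
Proof.
under eq_bigr do rewrite mulrCA mulr_sumr.
rewrite -mulr_sumr exchange_big; congr (_ * _); apply: eq_bigr => j _.
rewrite exchange_big /= mulr_suml; apply: eq_bigr => i _.
by rewrite mulrA mulr_sumr.
Qed.

Lemma le_avg_precision_sorted (T : eqType) N (q : T -> R) (l l' : seq T) :
  sorted (fun u v => q v <= q u) l' -> perm_eq l l' ->
  avg_precision N q l <= avg_precision N q l'.
Proof.
move=> sorted_l' perm_ll'; rewrite ler_wpM2l ?invr_ge0 ?ler0n //.
apply: ler_sum => j _; rewrite ler_wpM2r ?invr_ge0 ?ler0n //.
exact: sum_take_le_sorted.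
Qed.

End AveragePrecision.

Section CanonicalScheme.
Variables (R : realFieldType) (V : finType) (K : nat) (b : V -> 'I_K) (Lam : 'M[R]_K).
Hypotheses (Lam_sym : forall i j, Lam i j = Lam j i)
  (Lam_pos : forall i j, 0 < Lam i j) (Lam_lt1 : forall i j, Lam i j < 1).
Variables (S : {set V}) (o : 'I_K).
Implicit Types (G : {set {set V}}) (L : {set {set V}} -> seq V).
Local Notation stab := ('C(S | 'P))%g.
Local Notation weight G := (\sum_(s in stab) sbm_prob b Lam (relabel s G)).
Local Notation N := (bsize b o - #|S :&: [set v | b v == o]|)%N.

Lemma sum_stab_sbm_prob_block G v : is_graph G ->
  \sum_(s in stab) sbm_prob b Lam (relabel s G) * (b (s v) == o)%:R =
  weight G * Qpost b o Lam S G v.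
Proof.
move=> HG.
set c := sbm_prob b Lam set0 / lik b Lam set0 [ffun x => b x].
set M := #|[set s in stab | [ffun x => b (s x)] == [ffun x => b x]]|.
set Z := \sum_(phi | admissible b S phi) lik b Lam G phi.
have average h :
    \sum_(s in stab) sbm_prob b Lam (relabel s G) * h [ffun x => b (s x)] =
    c * (\sum_(phi | admissible b S phi) lik b Lam G phi * h phi) *+ M.
  rewrite -mulrnAr -sum_stab_admissible mulr_sumr; apply: eq_bigr => s _.
  have lik0_neq0 : lik b Lam set0 [ffun x => b x] != 0 by rewrite gt_eqF ?lik_gt0.
  apply: (mulIf lik0_neq0); rewrite mulrAC sbm_prob_lik ?is_graph_relabel //.
  have -> : lik b Lam (relabel s G) [ffun x => b x] = lik b Lam G [ffun x => b (s x)].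
    by rewrite -lik_relabel; congr lik; apply/ffunP => x; rewrite !ffunE.
  by rewrite [RHS]mulrAC divfK // mulrA.
have Z_gt0 : 0 < Z.
  rewrite /Z (bigD1 _ (admissible_blocks b S)) /= ltr_wpDr ?lik_gt0 //.
  by apply: sumr_ge0 => phi _; rewrite ltW ?lik_gt0.
have weightE : weight G = c * Z *+ M.
  by have := average (fun=> 1); rewrite !(eq_bigr _ (fun _ _ => mulr1 _)).
have blockE : \sum_(phi | admissible b S phi) lik b Lam G phi * (phi v == o)%:R =
              \sum_(phi | admissible b S phi && (phi v == o)) lik b Lam G phi.
  rewrite [RHS]big_mkcondr; apply: eq_bigr => phi _.
  by case: (phi v == o); rewrite ?mulr1 ?mulr0.
transitivity
  (c * (\sum_(phi | admissible b S phi) lik b Lam G phi * (phi v == o)%:R) *+ M).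
  by rewrite -average; apply: eq_bigr => s _; rewrite ffunE.
by rewrite weightE blockE mulrnAl -mulrA [Z * _]mulrC divfK ?gt_eqF.
Qed.

Lemma MAP_avg_precision L :
  MAP b o Lam S L = \sum_(G | is_graph G)
    sbm_prob b Lam G * avg_precision N (fun v => (b v == o)%:R) (L G).
Proof.
apply: eq_bigr => G _; congr (_ * (_ * _)); apply: eq_bigr => j _; congr (_ / _).
by rewrite -sum1_count natr_sum big_mkcond; apply: eq_bigr => v _; case: (b v == o).
Qed.

Lemma MAP_stab_average L : is_VN_scheme S L ->
  MAP b o Lam S L *+ #|stab| =
  \sum_(G | is_graph G) weight G * avg_precision N (Qpost b o Lam S G) (L G).
Proof.
move=> VN_L; rewrite MAP_avg_precision -sumr_const.
transitivity (\sum_(s in stab) \sum_(G | is_graph G) sbm_prob b Lam (relabel s G) *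
    avg_precision N (fun v => (b v == o)%:R) (L (relabel s G))).
  apply: eq_bigr => s _; rewrite (reindex_inj (@relabel_inj _ s)) /=.
  by apply: eq_bigl => G; rewrite is_graph_relabel.
rewrite exchange_big; apply: eq_bigr => G HG.
under eq_bigr => s s_stab do
  rewrite (VN_scheme_relabel VN_L HG s_stab) avg_precision_map.
rewrite avg_precision_sum -avg_precision_scale; apply: eq_avg_precision => v /=.
exact: sum_stab_sbm_prob_block.
Qed.

End CanonicalScheme.

Unset Implicit Arguments.

Theorem theorem1 (R : realFieldType) (V : finType) (K : nat) (hK : (0 < K)%N)
  (b : V -> 'I_K) (Lam : 'M[R]_K)
  (Lam_sym : forall i j, Lam i j = Lam j i)
  (Lam_pos : forall i j, 0 < Lam i j) (Lam_lt1 : forall i j, Lam i j < 1)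
  (S : {set V})
  (hA : (1 <= bsize b (Ordinal hK) - #|S :&: [set v | b v == Ordinal hK]|)%N)
  (LC : {set {set V}} -> seq V)
  (hLC : is_canonical_scheme b (Ordinal hK) Lam S LC)
  (L : {set {set V}} -> seq V) (hL : is_VN_scheme S L) :
  MAP b (Ordinal hK) Lam S L <= MAP b (Ordinal hK) Lam S LC.
Proof.
case: hLC => LC_VN LC_sorted.
suff : MAP b (Ordinal hK) Lam S L *+ #|'C(S | 'P)%g| <=
       MAP b (Ordinal hK) Lam S LC *+ #|'C(S | 'P)%g|.
  by rewrite lerMn2r gtn_eqF ?cardG_gt0.
rewrite !MAP_stab_average //; apply: ler_sum => G HG.
apply: ler_wpM2l; first by apply: sumr_ge0 => s _; apply: sbm_prob_ge0.
have [asym | sym] := boolP (asymmetric G).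
  apply: le_avg_precision_sorted; first exact: LC_sorted.
  by rewrite (perm_trans (hL.2.1 G HG asym)) // perm_sym (LC_VN.2.1 G HG asym).
by rewrite (hL.1 G HG sym) (LC_VN.1 G HG sym).
Qed.
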